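(* Consider a signal–idler system of one bosonic signal mode $S$ and one bosonic idler mode $I$, with quadrature vector ${\bf R}=(q_S,p_S,q_I,p_I)^\top$, commutation relations $[R_i,R_j]=\mathrm{i}\Omega_{ij}$ with ${\bf \Omega}=\mathbb{I}_2\otimes(\mathrm{i}\sigma_y)$, covariance matrix $\Sigma_{ij}=\frac12\langle R_iR_j+R_jR_i\rangle-\langle R_i\rangle\langle R_j\rangle$ and first-moment vector $d_i=\langle R_i\rangle$. The signal is sent through the thermal lossy channel, which maps ${\bf d}=[{\bf d}_S^\top,{\bf d}_I^\top]^\top\mapsto[\eta{\bf d}_S^\top,{\bf d}_I^\top]^\top$ and ${\bf \Sigma}=\begin{bmatrix}{\bf \Sigma}_S & {\bf \Sigma}_{SI}\\ {\bf \Sigma}_{SI}^\top & {\bf \Sigma}_I\end{bmatrix}\mapsto\begin{bmatrix}\eta^2{\bf \Sigma}_S+y(\eta)\mathbb{I}_2 & \eta{\bf \Sigma}_{SI}\\ \eta{\bf \Sigma}_{SI}^\top & {\bf \Sigma}_I\end{bmatrix}$, with $y(\eta)=(1-\eta^2)(N_B+\frac12)$. Then, for the purpose of estimating $\eta$, the covariance matrix and first-moment vector of a generic input state of this channel (with a single-mode idler) can be canonically expressed as \begin{align*} {\bf d}=\begin{bmatrix} q \\ p \\ 0\\0\end{bmatrix},\quad {\bf \Sigma}=\begin{bmatrix} a{\bf S}(r) & {\bf R}(\phi){\bf C}\\ [{\bf R}(\phi){\bf C}]^\top & b\mathbb{I}_2\end{bmatrix}, \end{align*} where ${\bf S}(r)={\rm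 diag}(r,r^{-1})$, ${\bf R}(\phi)=\begin{bmatrix}\cos\phi & -\sin\phi\\ \sin\phi & \cos\phi\end{bmatrix}$, ${\bf C}={\rm diag}(c_+,c_-)$. Here all parameters are real and respect the constraints given by the Heisenberg relation ${\bf \Sigma}+\mathrm{i}{\bf \Omega}/2\succeq0$.
   Context: The reduction is without loss of generality because the channel commutes with any rotation applied to the signal and any symplectic (Gaussian unitary) transformation applied to the idler, so these can be applied to the input without changing the information about $\eta$. $N_B\geq0$ is the mean thermal photon number of the bath and $\eta$ is the lossy transmission parameter. *)

From HB Require Import structures.
From mathcomp Require Import all_boot all_order all_algebra.
From mathcomp Require Import all_classical all_reals.
From mathcomp Require Import trigo.
From mathcomp Require Import complex.
Set Implicit Arguments. Unset Strict Implicit. Unset Printing Implicit Defensive.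
Import Order.TTheory GRing.Theory Num.Theory.
Local Open Scope ring_scope.

Section Defs.
Variable R : realType.

Definition mx2 (a b c d : R) : 'M[R]_2 :=
  \matrix_(i < 2, j < 2)
    (if i == 0 :> nat then (if j == 0 :> nat then a else b)
                      else (if j == 0 :> nat then c else d)).

Definition col2 (x y : R) : 'cV[R]_2 :=
  \col_(i < 2) (if i == 0 :> nat then x else y).

Definition iSy : 'M[R]_2 := mx2 0 1 (-1) 0.

(* Omega = I_2 (x) (i sigma_y), quadrature ordering (q_S,p_S,q_I,p_I). *)
Definition Omega : 'M[R]_(2 + 2) := block_mx iSy 0 0 iSy.

Definition Smx (r : R) : 'M[R]_2 := mx2 r 0 0 r^-1.
Definition Rot (phi : R) : 'M[R]_2 := mx2 (cos phi) (- sin phi) (sin phi) (cos phi).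
Definition Cmx (cp cm : R) : 'M[R]_2 := mx2 cp 0 0 cm.

Definition symplectic2 (S : 'M[R]_2) : Prop := S *m iSy *m S^T = iSy.

Definition cmx m n (A : 'M[R]_(m, n)) : 'M[R[i]]_(m, n) :=
  map_mx (fun x : R => (x%:C)%C) A.

Definition adj m n (A : 'M[R[i]]_(m, n)) : 'M[R[i]]_(n, m) := (map_mx conjc A)^T.

Definition psd n (M : 'M[R[i]]_n) : Prop :=
  forall z : 'cV[R[i]]_n, 0 <= (adj z *m M *m z) 0 0.

Definition heisenberg (Sigma : 'M[R]_(2 + 2)) : Prop :=
  psd (cmx Sigma + (('i)%C / 2%:R) *: cmx Omega).

Definition yfun (NB eta : R) : R := (1 - eta ^+ 2) * (NB + 2%:R^-1).

Definition chan_d (eta : R) (d : 'cV[R]_(2 + 2)) : 'cV[R]_(2 + 2) :=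
  col_mx (eta *: usubmx d) (dsubmx d).

Definition chan_Sigma (NB eta : R) (Sigma : 'M[R]_(2 + 2)) : 'M[R]_(2 + 2) :=
  block_mx (eta ^+ 2 *: ulsubmx Sigma + yfun NB eta *: 1%:M) (eta *: ursubmx Sigma)
           (eta *: dlsubmx Sigma) (drsubmx Sigma).

(* local Gaussian unitary: rotation R(theta) on the signal, symplectic SI on the
   idler, plus idler displacement delta:  d |-> G d + e,  Sigma |-> G Sigma G^T *)
Definition Gloc (theta : R) (SI : 'M[R]_2) : 'M[R]_(2 + 2) :=
  block_mx (Rot theta) 0 0 SI.
Definition eloc (delta : 'cV[R]_2) : 'cV[R]_(2 + 2) := col_mx 0 delta.

Definition d_canon (q p : R) : 'cV[R]_(2 + 2) := col_mx (col2 q p) 0.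
Definition Sigma_canon (a r phi cp cm b : R) : 'M[R]_(2 + 2) :=
  block_mx (a *: Smx r) (Rot phi *m Cmx cp cm)
           (Rot phi *m Cmx cp cm)^T (b *: 1%:M).

End Defs.

From HB Require Import structures.
From mathcomp Require Import all_boot all_order all_algebra.
From mathcomp Require Import all_classical all_reals.
From mathcomp Require Import trigo.
From mathcomp Require Import complex.
From mathcomp Require Import ring lra.

Set Implicit Arguments.
Unset Strict Implicit.
Unset Printing Implicit Defensive.

Import Order.TTheory GRing.Theory Num.Theory.
Local Open Scope ring_scope.

(* Write Sigma in 2x2 blocks [[A, B], [B^T, D]].  The local operations act by
   congruence with G = diag(R(theta), S_I) and commute with the channel, which
   only rescales the signal blocks and adds a multiple of the identity, something
   a rotation preserves.  A rotation theta diagonalises A; on the idler, a rotation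
   followed by a squeezer turns D into b I (its eigenvalues are positive by the
   uncertainty relation), and a last rotation, which fixes b I, brings the cross
   block to the form R(phi) C by the real singular value decomposition.  The idler
   displacement cancels the idler first moments, and the uncertainty relation
   survives because G is symplectic. *)

Section CanonicalForm.
Variable R : realType.
Implicit Types (a b c d e f g h k r s t x y : R) (A M : 'M[R]_2).

Lemma mx2E A : A = mx2 (A 0 0) (A 0 1) (A 1 0) (A 1 1).
Proof.
by apply/matrixP=> i j; rewrite !mxE; case: i => [[|[|//]] ?]; case: j => [[|[|//]] ?];
  congr (A _ _); apply/val_inj.
Qed.

Lemma mx2_sym A : A^T = A -> A = mx2 (A 0 0) (A 0 1) (A 0 1) (A 1 1).
Proof. by move=> sA; rewrite {1}[A]mx2E -[in A 1 0]sA mxE. Qed.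

Lemma mx2_ext A M : A 0 0 = M 0 0 -> A 0 1 = M 0 1 -> A 1 0 = M 1 0 -> A 1 1 = M 1 1 ->
  A = M.
Proof. by rewrite [A]mx2E [M]mx2E !mxE /= => -> -> -> ->. Qed.

Lemma mul_mx2 a b c d e f g h :
  mx2 a b c d *m mx2 e f g h = mx2 (a*e + b*g) (a*f + b*h) (c*e + d*g) (c*f + d*h) :> 'M[R]_2.
Proof. by apply: mx2_ext; rewrite !mxE !big_ord_recl big_ord0 !mxE /= addr0. Qed.

Lemma tr_mx2 a b c d : (mx2 a b c d)^T = mx2 a c b d :> 'M[R]_2.
Proof. by apply: mx2_ext; rewrite !mxE. Qed.

Lemma scale_mx2 k a b c d : k *: mx2 a b c d = mx2 (k * a) (k * b) (k * c) (k * d) :> 'M[R]_2.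
Proof. by apply: mx2_ext; rewrite !mxE. Qed.

Lemma add_mx2 a b c d e f g h :
  mx2 a b c d + mx2 e f g h = mx2 (a + e) (b + f) (c + g) (d + h) :> 'M[R]_2.
Proof. by apply: mx2_ext; rewrite !mxE. Qed.

Lemma scalar_mx2 a : a%:M = mx2 a 0 0 a :> 'M[R]_2.
Proof. by apply: mx2_ext; rewrite !mxE. Qed.


Local Notation J := (Cmx (1 : R) (-1)).

Lemma mulmx_Rot s t : Rot s *m Rot t = Rot (s + t).
Proof. by rewrite /Rot mul_mx2 cosD sinD; congr mx2; ring. Qed.

Lemma tr_Rot t : (Rot t)^T = Rot (- t).
Proof. by rewrite /Rot tr_mx2 cosN sinN opprK. Qed.

Lemma Rot0 : Rot 0 = 1%:M :> 'M[R]_2.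
Proof. by rewrite /Rot cos0 sin0 oppr0 scalar_mx2. Qed.

Lemma Rot_mulmxT t : Rot t *m (Rot t)^T = 1%:M.
Proof. by rewrite tr_Rot mulmx_Rot subrr Rot0. Qed.

Lemma Rot_reflection_Rot s t : Rot s *m J *m Rot t = Rot (s - t) *m J.
Proof.
have J_Rot : J *m Rot t = Rot (- t) *m J.
  by rewrite /Cmx /Rot !mul_mx2 cosN sinN; congr mx2; ring.
by rewrite -mulmxA J_Rot mulmxA mulmx_Rot.
Qed.

Lemma Cmx_add_reflection a b : Cmx (a + b) (a - b) = a%:M + b *: J.
Proof. by rewrite /Cmx scalar_mx2 scale_mx2 add_mx2; congr mx2; ring. Qed.

Lemma exists_pos_sqrt k : 0 < k -> exists2 s, 0 < s & s ^+ 2 = k.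
Proof. by move=> k_gt0; exists (Num.sqrt k); rewrite ?sqrtr_gt0 ?sqr_sqrtr // ltW. Qed.

Lemma polar x y : exists r t, x = r * cos t /\ y = r * sin t.
Proof.
have [x2y20|x2y2_neq0] := eqVneq (x ^+ 2 + y ^+ 2) 0.
  by exists 0, 0; rewrite !mul0r; split; nra.
have [r [r_gt0 r2]] : exists r, 0 < r /\ r ^+ 2 = x ^+ 2 + y ^+ 2.
  have [|r] := @exists_pos_sqrt (x ^+ 2 + y ^+ 2); first by rewrite lt0r x2y2_neq0 /=; nra.
  by exists r.
have xr_bound : -1 <= x / r <= 1.
  by rewrite ler_pdivlMr // ler_pdivrMr // mulN1r mul1r; apply/andP; split; nra.
have sin_acos_xr : sin (acos (x / r)) = `|y| / r.
  have y2 : y ^+ 2 = r ^+ 2 - x ^+ 2 by rewrite r2 addrAC subrr add0r.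
  have e : Num.sqrt (1 - (x / r) ^+ 2) = Num.sqrt ((y / r) ^+ 2).
    by congr Num.sqrt; rewrite !expr_div_n y2; field; rewrite gt_eqF.
  by rewrite sin_acos // e sqrtr_sqr normf_div (ger0_norm (ltW r_gt0)).
have [y_ge0|y_lt0] := lerP 0 y.
  exists r, (acos (x / r)); rewrite acosK ?in_itv // sin_acos_xr ger0_norm //.
  by split; field; rewrite gt_eqF.
exists r, (- acos (x / r)); rewrite cosN sinN acosK ?in_itv // sin_acos_xr ltr0_norm //.
by split; field; rewrite gt_eqF.
Qed.

Lemma conformal_decomposition M :
  exists r1 t1 r2 t2, M = r1 *: Rot t1 + r2 *: (Rot t2 *m J).
Proof.
have [r1 [t1 [e1 f1]]] := polar ((M 0 0 + M 1 1) / 2) ((M 1 0 - M 0 1) / 2).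
have [r2 [t2 [e2 f2]]] := polar ((M 0 0 - M 1 1) / 2) ((M 0 1 + M 1 0) / 2).
exists r1, t1, r2, t2.
by rewrite {1}[M]mx2E /Rot /Cmx mul_mx2 !scale_mx2 add_mx2; congr mx2; lra.
Qed.

Lemma Rot_svd M : exists phi cp cm t, M = Rot phi *m Cmx cp cm *m Rot t.
Proof.
have [r1 [t1 [r2 [t2 ->]]]] := conformal_decomposition M.
exists ((t1 + t2) / 2), (r1 + r2), (r1 - r2), ((t1 - t2) / 2).
rewrite Cmx_add_reflection mulmxDr mulmxDl mul_mx_scalar -scalemxAr -!scalemxAl.
by rewrite mulmx_Rot Rot_reflection_Rot; congr (_ *: Rot _ + _ *: (Rot _ *m _)); field.
Qed.

Lemma Rot_diag_sym A : A^T = A -> exists t x y, Rot t *m A *m (Rot t)^T = Cmx x y.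
Proof.
move=> sA; set m := (A 0 0 + A 1 1) / 2.
have [r [s [e f]]] := polar ((A 0 0 - A 1 1) / 2) (A 0 1).
have -> : A = m%:M + r *: (Rot s *m J).
  by rewrite {1}(mx2_sym sA) /Rot /Cmx mul_mx2 scale_mx2 scalar_mx2 add_mx2 /m; congr mx2; lra.
exists (- s / 2), (m + r), (m - r).
rewrite Cmx_add_reflection mulmxDr mulmxDl mul_mx_scalar -scalemxAl Rot_mulmxT.
rewrite -scalemxAr -scalemxAl mulmxA mulmx_Rot tr_Rot Rot_reflection_Rot.
by rewrite (_ : _ - _ = 0) ?Rot0 ?mul1mx ?scalemx1 //; field.
Qed.

Lemma symplectic2_mx2 a b c d : a * d - b * c = 1 -> symplectic2 (mx2 a b c d).
Proof. by move=> det1; rewrite /symplectic2 /iSy tr_mx2 !mul_mx2; congr mx2; nra. Qed.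

Lemma symplectic2_Rot t : symplectic2 (Rot t).
Proof. by apply: symplectic2_mx2; rewrite -(cos2Dsin2 t); ring. Qed.

Lemma symplectic2_Cmx s : s != 0 -> symplectic2 (Cmx s s^-1).
Proof. by move=> s_neq0; apply: symplectic2_mx2; rewrite mulfV // mulr0 subr0. Qed.

Lemma symplectic2_mul A M : symplectic2 A -> symplectic2 M -> symplectic2 (A *m M).
Proof.
rewrite /symplectic2 trmx_mul !mulmxA => sA sM.
by rewrite -(mulmxA A M) -(mulmxA A (M *m _)) sM sA.
Qed.

Lemma squeeze_to_scalar x y : 0 < x -> 0 < y ->
  exists S b, symplectic2 S /\ S *m Cmx x y *m S^T = b%:M.
Proof.
move=> x_gt0 y_gt0.
have [k k_gt0 k2] := exists_pos_sqrt (divr_gt0 y_gt0 x_gt0).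
have [s s_gt0 s2] := exists_pos_sqrt k_gt0.
exists (Cmx s s^-1), (k * x); split; first by apply: symplectic2_Cmx; rewrite gt_eqF.
have -> : y = k ^+ 2 * x by rewrite k2 mulfVK // gt_eqF.
by rewrite /Cmx tr_mx2 !mul_mx2 scalar_mx2 -s2; congr mx2; field; rewrite ?gt_eqF.
Qed.

Lemma Cmx_scaled_Smx x y : 0 < x -> 0 < y -> exists a r, 0 < r /\ Cmx x y = a *: Smx r.
Proof.
move=> x_gt0 y_gt0; have [r r_gt0 r2] := exists_pos_sqrt (divr_gt0 x_gt0 y_gt0).
have -> : y = x / r ^+ 2 by rewrite r2 invf_div mulrC divfK // gt_eqF.
exists (x / r), r; split => //.
by rewrite /Smx /Cmx scale_mx2; congr mx2; field; rewrite ?gt_eqF.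
Qed.

Lemma cmxM m n p (A : 'M[R]_(m, n)) (B : 'M[R]_(n, p)) : cmx (A *m B) = cmx A *m cmx B.
Proof. exact: map_mxM. Qed.

Lemma adj_cmx m n (A : 'M[R]_(m, n)) : adj (cmx A) = cmx A^T.
Proof. by rewrite /adj; apply/matrixP=> i j; rewrite !mxE conjc_real. Qed.

Lemma adjM m n p (A : 'M[R[i]]_(m, n)) (B : 'M[R[i]]_(n, p)) : adj (A *m B) = adj B *m adj A.
Proof. by rewrite /adj map_mxM trmx_mul. Qed.

Lemma adjK m n (A : 'M[R[i]]_(m, n)) : adj (adj A) = A.
Proof. by rewrite /adj; apply/matrixP=> i j; rewrite !mxE conjcK. Qed.

Lemma psd_congr m n (M : 'M[R[i]]_n) (G : 'M[R[i]]_(m, n)) : psd M -> psd (G *m M *m adj G).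
Proof. by move=> psdM z; have := psdM (adj G *m z); rewrite adjM adjK !mulmxA. Qed.

Lemma heisenberg_congr (G S : 'M[R]_(2 + 2)) :
  G *m Omega R *m G^T = Omega R -> heisenberg S -> heisenberg (G *m S *m G^T).
Proof.
move=> GOmega hS; rewrite /heisenberg -GOmega !cmxM -!adj_cmx scalemxAl scalemxAr.
by rewrite -mulmxDl -mulmxDr; apply: psd_congr.
Qed.

Lemma psd_pair n (M : 'M[R[i]]_n) (i j : 'I_n) (b : R[i]) : psd M ->
  0 <= M i i + b * M i j + b^*%C * M j i + b^*%C * b * M j j.
Proof.
move=> /(_ (delta_mx i 0 + b *: delta_mx j 0)).
have -> : adj (delta_mx i 0 + b *: delta_mx j 0 : 'cV_n) = delta_mx 0 i + b^*%C *: delta_mx 0 j.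
  rewrite /adj; apply/matrixP=> k l.
  by rewrite !mxE rmorphD rmorphM /= !conjc_nat !(andbC (k == 0)).
rewrite !(mulmxDl, mulmxDr) -!scalemxAl -!scalemxAr -!rowE -!colE !mxE.
by rewrite addrA; congr (0 <= _); ring.
Qed.

Lemma Omega_partner (k : 'I_(2 + 2)) : exists l, Omega R k l != 0.
Proof.
have iSy_partner (j : 'I_2) : exists j', iSy R j j' != 0.
  by case: j => [[|[|//]] ?]; [exists 1 | exists 0]; rewrite !mxE /= ?oppr_eq0 oner_eq0.
case: (split_ordP k) => j ->; have [j' iSy_jj'] := iSy_partner j.
  by exists (lshift 2 j'); rewrite /Omega block_mxEul.
by exists (rshift 2 j'); rewrite /Omega block_mxEdr.
Qed.

Lemma Omega_antisym : (Omega R)^T = - Omega R.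
Proof.
have iSyT : (iSy R)^T = - iSy R.
  by rewrite /iSy tr_mx2; apply: mx2_ext; rewrite !mxE /= ?oppr0 ?opprK.
by rewrite /Omega tr_block_mx !trmx0 iSyT opp_block_mx oppr0.
Qed.

Lemma quad_gt0 (x w : R) : (forall al, 0 <= x - al + al ^+ 2 * w) -> 0 < x.
Proof.
move=> q; set v := (`|w| + 1)^-1.
have v_gt0 : 0 < v by rewrite invr_gt0 ltr_wpDl.
have vw1 : v * (`|w| + 1) = 1 by rewrite mulVf // gt_eqF // ltr_wpDl.
have := q v; have := ler_norm w; nra.
Qed.

Lemma heisenberg_quad (S : 'M[R]_(2 + 2)) i j al : S^T = S -> heisenberg S ->
  0 <= S i i - al * Omega R i j + al ^+ 2 * S j j.
Proof.
move=> sS hS; have := psd_pair i j (al%:C * 'i)%C hS.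
have Sji : S j i = S i j by rewrite -[in LHS]sS mxE.
have OmegaT (u v : 'I_(2 + 2)) : Omega R v u = - Omega R u v.
  by have := congr1 (fun B : 'M_(2 + 2) => B u v) Omega_antisym; rewrite !mxE.
have Oii (u : 'I_(2 + 2)) : Omega R u u = 0 by have := OmegaT u u; lra.
have entry (u v : 'I_(2 + 2)) : (cmx S + ('i%C / 2%:R) *: cmx (Omega R)) u v
    = (S u v)%:C%C + ('i%C / 2%:R) * (Omega R u v)%:C%C by rewrite !mxE.
rewrite !entry Sji (OmegaT i j) !Oii; set E := (X in 0 <= X -> _).
suff -> : E = (S i i - al * Omega R i j + al ^+ 2 * S j j)%:C%C by rewrite ler0c.
by apply/eqP; rewrite eq_complex /=; apply/andP; split; apply/eqP; field.
Qed.

Lemma heisenberg_diag_gt0 (S : 'M[R]_(2 + 2)) (k : 'I_(2 + 2)) :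
  S^T = S -> heisenberg S -> 0 < S k k.
Proof.
move=> sS hS; have [l Okl_neq0] := Omega_partner k; set o := Omega R k l in Okl_neq0.
apply: (@quad_gt0 _ (S l l / o ^+ 2)) => al.
have := heisenberg_quad k l (al / o) sS hS.
have -> : (al / o) ^+ 2 * S l l = al ^+ 2 * (S l l / o ^+ 2) by field.
by rewrite divfK.
Qed.

Lemma conj_mulmx m n p (P : 'M[R]_(m, n)) (Q : 'M[R]_(n, p)) (M : 'M[R]_p) :
  P *m Q *m M *m (P *m Q)^T = P *m (Q *m M *m Q^T) *m P^T.
Proof. by rewrite trmx_mul !mulmxA. Qed.

Lemma block_diag_conj (P Q A B C D : 'M[R]_2) :
  block_mx P 0 0 Q *m block_mx A B C D *m (block_mx P 0 0 Q)^T =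
  block_mx (P *m A *m P^T) (P *m B *m Q^T) (Q *m C *m P^T) (Q *m D *m Q^T).
Proof. by rewrite tr_block_mx !trmx0 !mulmx_block !mulmx0 !mul0mx !addr0 !add0r. Qed.

Lemma Gloc_conj_sym theta SI (A B D : 'M[R]_2) :
  Gloc theta SI *m block_mx A B B^T D *m (Gloc theta SI)^T =
  block_mx (Rot theta *m A *m (Rot theta)^T) (Rot theta *m B *m SI^T)
           (Rot theta *m B *m SI^T)^T (SI *m D *m SI^T).
Proof. by rewrite block_diag_conj !trmx_mul trmxK mulmxA. Qed.

Lemma heisenberg_Cmx_blocks_gt0 (S : 'M[R]_(2 + 2)) l1 l2 m1 m2 (X Y : 'M[R]_2) :
  S^T = S -> heisenberg S -> S = block_mx (Cmx l1 l2) X Y (Cmx m1 m2) ->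
  [/\ 0 < l1, 0 < l2, 0 < m1 & 0 < m2].
Proof.
move=> sS hS SE; have S_gt0 (u : 'I_(2 + 2)) := heisenberg_diag_gt0 u sS hS.
move: (S_gt0 (lshift 2 0)) (S_gt0 (lshift 2 1)) (S_gt0 (rshift 2 0)) (S_gt0 (rshift 2 1)).
by rewrite SE !block_mxEul !block_mxEdr !mxE.
Qed.

Lemma heisenberg_Gloc theta SI (S : 'M[R]_(2 + 2)) :
  symplectic2 SI -> heisenberg S -> heisenberg (Gloc theta SI *m S *m (Gloc theta SI)^T).
Proof.
move=> sSI; apply: heisenberg_congr.
by rewrite /Gloc /Omega block_diag_conj !mulmx0 !mul0mx symplectic2_Rot sSI.
Qed.

Lemma chan_d_Gloc eta theta SI delta (d : 'cV[R]_(2 + 2)) :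
  chan_d eta (Gloc theta SI *m d + eloc delta) = Gloc theta SI *m chan_d eta d + eloc delta.
Proof.
rewrite /chan_d /Gloc /eloc -[d]vsubmxK !(mul_block_col, mul0mx, addr0, add0r).
by rewrite add_col_mx !(col_mxKu, col_mxKd) !addr0 scalemxAr add_col_mx addr0.
Qed.

Lemma chan_Sigma_Gloc NB eta theta SI (S : 'M[R]_(2 + 2)) :
  chan_Sigma NB eta (Gloc theta SI *m S *m (Gloc theta SI)^T)
  = Gloc theta SI *m chan_Sigma NB eta S *m (Gloc theta SI)^T.
Proof.
rewrite /chan_Sigma /Gloc -[S]submxK !block_diag_conj.
rewrite !(block_mxKul, block_mxKur, block_mxKdl, block_mxKdr).
by rewrite mulmxDr mulmxDl -!scalemxAr -!scalemxAl mulmx1 Rot_mulmxT.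
Qed.

Lemma Gloc_d_canon theta SI (d : 'cV[R]_(2 + 2)) :
  Gloc theta SI *m d + eloc (- (SI *m dsubmx d))
  = d_canon ((Rot theta *m usubmx d) 0 0) ((Rot theta *m usubmx d) 1 0).
Proof.
rewrite /Gloc /eloc /d_canon -{1}[d]vsubmxK mul_block_col !mul0mx addr0 add0r add_col_mx.
rewrite addr0 addrN; congr col_mx; apply/matrixP=> i j; rewrite [RHS]mxE (ord1 j).
by case: i => [[|[|//]] ?] /=; congr (_ _ _); apply: val_inj.
Qed.

Lemma covariance_normal_form (Sigma : 'M[R]_(2 + 2)) :
  Sigma^T = Sigma -> heisenberg Sigma ->
  exists theta SI a r phi cp cm b, [/\ symplectic2 SI, 0 < r &
    Gloc theta SI *m Sigma *m (Gloc theta SI)^T = Sigma_canon a r phi cp cm b].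
Proof.
move=> hsym hH; set A := ulsubmx Sigma; set B := ursubmx Sigma; set D := drsubmx Sigma.
have Sigma_blocks : Sigma = block_mx A B B^T D by rewrite /B trmx_ursub hsym submxK.
have sA : A^T = A by rewrite /A trmx_ulsub hsym.
have sD : D^T = D by rewrite /D trmx_drsub hsym.
have [th [l1 [l2 hA]]] := Rot_diag_sym sA.
have [t2 [m1 [m2 hD]]] := Rot_diag_sym sD.
have [l1_gt0 l2_gt0 m1_gt0 m2_gt0] : [/\ 0 < l1, 0 < l2, 0 < m1 & 0 < m2].
  apply: (heisenberg_Cmx_blocks_gt0 _ (heisenberg_Gloc th (symplectic2_Rot t2) hH)).
    by rewrite !trmx_mul trmxK hsym mulmxA.
  by rewrite Sigma_blocks Gloc_conj_sym hA hD.
have [S2 [b [sS2 hS2]]] := squeeze_to_scalar m1_gt0 m2_gt0.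
have [phi [cp [cm [t3 hB]]]] := Rot_svd (Rot th *m B *m (S2 *m Rot t2)^T).
have [a [r [r_gt0 hCmx]]] := Cmx_scaled_Smx l1_gt0 l2_gt0.
exists th, (Rot t3 *m (S2 *m Rot t2)), a, r, phi, cp, cm, b; split => //.
  by do !apply: symplectic2_mul => //; apply: symplectic2_Rot.
rewrite Sigma_blocks Gloc_conj_sym hA hCmx.
have -> : Rot th *m B *m (Rot t3 *m (S2 *m Rot t2))^T = Rot phi *m Cmx cp cm.
  by rewrite trmx_mul mulmxA hB -mulmxA Rot_mulmxT mulmx1.
by rewrite !conj_mulmx hD hS2 mul_mx_scalar -scalemxAl Rot_mulmxT.
Qed.

End CanonicalForm.

Theorem lemma7 (R : realType) (NB : R) (hNB : 0 <= NB)
    (d : 'cV[R]_(2 + 2)) (Sigma : 'M[R]_(2 + 2))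
    (hsym : Sigma^T = Sigma) (hH : heisenberg Sigma) :
  exists (theta : R) (SI : 'M[R]_2) (delta : 'cV[R]_2),
    symplectic2 SI /\
    (forall eta : R,
        chan_d eta (Gloc theta SI *m d + eloc delta)
          = Gloc theta SI *m chan_d eta d + eloc delta /\
        chan_Sigma NB eta (Gloc theta SI *m Sigma *m (Gloc theta SI)^T)
          = Gloc theta SI *m chan_Sigma NB eta Sigma *m (Gloc theta SI)^T) /\
    exists q p a r phi cp cm b : R,
      0 < r /\
      Gloc theta SI *m d + eloc delta = d_canon q p /\
      Gloc theta SI *m Sigma *m (Gloc theta SI)^T = Sigma_canon a r phi cp cm b /\
      heisenberg (Sigma_canon a r phi cp cm b).
Proof.
have [theta [SI [a [r [phi [cp [cm [b [sSI r_gt0 canon]]]]]]]]] :=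
  covariance_normal_form hsym hH.
exists theta, SI, (- (SI *m dsubmx d)); split => //; split.
  by move=> eta; split; [apply: chan_d_Gloc | apply: chan_Sigma_Gloc].
exists ((Rot theta *m usubmx d) 0 0), ((Rot theta *m usubmx d) 1 0), a, r, phi, cp, cm, b.
split => //; split; first exact: Gloc_d_canon.
by split => //; rewrite -canon; apply: heisenberg_Gloc.
Qed.
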